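(* Let $(Z,d)$ be a distance space, $X\cup Y=Z$ a cover, and $A:=X\cap Y$. Assume $A$ is nonempty and that for every $x\in X\setminus A$, $y\in Y\setminus A$ and $v\in A$ one has $d(x,y)\ge d(x,v)$ and $d(x,y)\ge d(y,v)$. Assume moreover that for every $x\in X\setminus A$ and $y\in Y\setminus A$ one has $d(x,y)\ge\mathrm{diam}(A)$. Then $\mathrm{VR}_r(X)\cup\mathrm{VR}_r(Y)\hookrightarrow\mathrm{VR}_r(Z)$ is a weak equivalence for all $r\in[0,\infty)$.
   Context: A distance on a set $Z$ is a function $d\colon Z\times Z\to[0,\infty]$ with $d(x,y)=d(y,x)$ and $d(x,x)=0$ (no triangle inequality assumed). $\mathrm{diam}(A)$ is the supremum of $d(a,b)$ over $a,b\in A$ (the maximum for finite $A$). For $B\subset Z$ and $r\in[0,\infty)$, $\mathrm{VR}_r(B)$ is the simplicial complex of all finite nonempty $\sigma\subset B$ with $d(x,y)\le r$ for all $x,y\in\sigma$. Homotopical notions refer to geometric realizations. *)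

From mathcomp Require Import all_boot all_order all_algebra.
From mathcomp Require Import all_classical all_reals.
From mathcomp Require Import ereal.
From Stdlib Require List.
Import Order.TTheory GRing.Theory Num.Theory.

Set Implicit Arguments.
Unset Strict Implicit.
Unset Printing Implicit Defensive.

Local Open Scope classical_set_scope.
Local Open Scope ring_scope.

Section Defs.
Variable R : realType.

Definition is_distance (Z : Type) (d : Z -> Z -> \bar R) : Prop :=
  (forall x y, (0 <= d x y)%E) /\ (forall x y, d x y = d y x) /\
  (forall x, d x x = 0%E).

Definition diam (Z : Type) (d : Z -> Z -> \bar R) (A : set Z) : \bar R :=
  ereal_sup [set d a b | a in A & b in A].

Definition VR (Z : Type) (d : Z -> Z -> \bar R) (r : R) (B : set Z) : set (set Z) :=
  [set s | finite_set s /\ s !=set0 /\ s `<=` B /\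
           (forall x y, s x -> s y -> (d x y <= r%:E)%E)].

(** Geometric realization: points are functions Z -> R, nonnegative, whose
    support is a simplex of K, with coordinates summing to 1. *)
Definition supp (Z : Type) (f : Z -> R) : set Z := [set z | f z != 0].

Definition is_point (Z : Type) (K : set (set Z)) (f : Z -> R) : Prop :=
  (forall z, 0 <= f z) /\ K (supp f) /\ (exists2 s : seq Z,
     List.NoDup s /\ (forall z, supp f z <-> List.In z s) &
     \sum_(z <- s) f z = 1).

(** Weak (coherent) topology on |K|: U is open iff its trace on each closed
    simplex |s| (s in K) is open for the Euclidean topology of |s|. *)
Definition openK (Z : Type) (K : set (set Z)) (U : set (Z -> R)) : Prop :=
  (forall f, U f -> is_point K f) /\
  forall s, K s -> forall f, U f -> supp f `<=` s ->
    exists2 e : R, 0 < e &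
      forall g, is_point K g -> supp g `<=` s ->
        (forall z, s z -> `|g z - f z| < e) -> U g.

Definition contK (I : finType) (D : set (I -> R)) (Z : Type)
    (K : set (set Z)) (g : (I -> R) -> (Z -> R)) : Prop :=
  (forall p, D p -> is_point K (g p)) /\
  forall U, openK K U -> forall p, D p -> U (g p) ->
    exists2 e : R, 0 < e &
      forall q, D q -> (forall i, `|q i - p i| < e) -> U (g q).

Definition cube (I : finType) : set (I -> R) :=
  [set p | forall i, 0 <= p i <= 1].
Definition bdry (I : finType) : set (I -> R) :=
  [set p | exists i, p i = 0 \/ p i = 1].

Definition sph_map (n : nat) (Z : Type) (K : set (set Z)) (x : Z -> R)
    (g : ('I_n -> R) -> (Z -> R)) : Prop :=
  contK (@cube 'I_n) K g /\ forall p, cube p -> bdry p -> g p = x.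

Definition tcoord (n : nat) (t : R) (p : 'I_n -> R) : option 'I_n -> R :=
  fun o => match o with None => t | Some i => p i end.

Definition homot_rel (n : nat) (Z : Type) (K : set (set Z)) (x : Z -> R)
    (g0 g1 : ('I_n -> R) -> (Z -> R)) : Prop :=
  exists H : (option 'I_n -> R) -> (Z -> R),
    [/\ contK (@cube (option 'I_n)) K H,
        forall p, cube p -> H (tcoord 0 p) = g0 p,
        forall p, cube p -> H (tcoord 1 p) = g1 p &
        forall p t, cube p -> bdry p -> 0 <= t <= 1 -> H (tcoord t p) = x].

(** The inclusion |L| -> |K| (L a subcomplex of K) is a weak equivalence:
    it induces a bijection pi_n(|L|, x) -> pi_n(|K|, x) for all n and all
    base points x of |L| (for n = 0: bijection on path components, no base
    point needed), where pi_n(X,x) = homotopy classes of maps (I^n, dI^n) ->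
    (X, x) rel dI^n. *)
Definition weak_equiv_incl (Z : Type) (L K : set (set Z)) : Prop :=
  forall (n : nat) (x : Z -> R), (n = 0%N \/ is_point L x) ->
    (forall g : ('I_n -> R) -> (Z -> R), sph_map K x g ->
       exists2 g', sph_map L x g' & homot_rel K x g g') /\
    (forall g0 g1 : ('I_n -> R) -> (Z -> R), sph_map L x g0 -> sph_map L x g1 ->
       homot_rel K x g0 g1 -> homot_rel L x g0 g1).

End Defs.

From mathcomp Require Import all_boot all_order all_algebra.
From mathcomp Require Import all_classical all_reals.
From mathcomp Require Import ereal.
From mathcomp Require Import ring lra.
From Stdlib Require List.
Import Order.TTheory GRing.Theory Num.Theory.
Local Open Scope classical_set_scope.
Local Open Scope ring_scope.

(* Write K for VR_r(Z), L for VR_r(X) u VR_r(Y) (the union of the full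
   subcomplexes of K on X and on Y), and fix a0 in A.  The hypotheses say that
   every simplex of K meeting both X \ A and Y \ A lies within r of a0, so it
   spans a simplex of K together with a0.  For a point f of |K| let M and N be
   its masses on X \ A and Y \ A; removing c := min(M, N) proportionally from
   each side and putting 2c on a0 gives a point with no mass on one side, hence
   in |L|.  This retraction fixes |L|, and the straight-line homotopy to it
   stays in the simplex spanned by supp f and a0.  Both are Lipschitz for the
   l1 distance on each simplex, hence continuous for the weak topology, and a
   strong deformation retraction induces bijections on all homotopy groups. *)

Set Implicit Arguments.
Unset Strict Implicit.
Unset Printing Implicit Defensive.

Section SeqSums.
Variables (R : numDomainType) (T : eqType).
Implicit Types (l : seq T) (F : T -> R).

Lemma In_mem l z : List.In z l <-> z \in l.
Proof.
elim: l => [|a l IH] //=; rewrite inE; split.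
- by case=> [->|/IH ->]; rewrite ?eqxx ?orbT.
- by case/orP=> [/eqP ->|/IH]; [left|right].
Qed.

Lemma NoDup_uniq l : List.NoDup l <-> uniq l.
Proof.
elim: l => [|a l IH] /=; first by split => // _; constructor.
split.
- by move=> H; inversion H; subst; apply/andP; split; [apply/negP => /In_mem|apply/IH].
- by case/andP=> na /IH ul; constructor => // /In_mem; rewrite (negbTE na).
Qed.

Lemma big_support_eq l1 l2 F : uniq l1 -> uniq l2 ->
  (forall z, F z != 0 -> z \in l1) -> (forall z, F z != 0 -> z \in l2) ->
  \sum_(z <- l1) F z = \sum_(z <- l2) F z.
Proof.
have drop0 l : \sum_(z <- l | F z != 0) F z = \sum_(z <- l) F z.
  by rewrite big_mkcond; apply: eq_bigr => z _; case: eqP => // ->.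
move=> u1 u2 c1 c2; rewrite -(drop0 l1) -(drop0 l2) -big_filter -[RHS]big_filter.
apply: perm_big; apply: uniq_perm; rewrite ?filter_uniq // => z.
by rewrite !mem_filter; case: (boolP (F z != 0)) => //= /[dup] /c1 -> /c2 ->.
Qed.

Lemma big_neq0_witness l (P : pred T) F : \sum_(z <- l | P z) F z != 0 ->
  exists2 z, P z & F z != 0.
Proof.
elim: l => [|a l IH]; first by rewrite big_nil eqxx.
rewrite big_cons; case: ifP => [Pa|_ /IH //].
by case: (eqVneq (F a) 0) => [->|Fa _]; [rewrite add0r => /IH | exists a].
Qed.

Lemma ler_sum_term l F z : (forall w, 0 <= F w) -> z \in l ->
  F z <= \sum_(w <- l) F w.
Proof.
move=> F0; elim: l => // a l IH; rewrite inE big_cons => /orP [/eqP ->|/IH h].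
- by rewrite lerDl sumr_ge0.
- by rewrite (le_trans h) // lerDr.
Qed.

Lemma ler_sum_const l F e : (forall w, w \in l -> F w <= e) ->
  \sum_(w <- l) F w <= (size l)%:R * e.
Proof.
elim: l => [|a l IH] H; first by rewrite big_nil mul0r.
rewrite big_cons /= -addn1 natrD mulrDl mul1r addrC lerD //.
  by apply: IH => w wl; apply: H; rewrite inE wl orbT.
by apply: H; rewrite inE eqxx.
Qed.

End SeqSums.

Section RealBounds.
Variable R : realType.
Implicit Types (a b c m u q : R).

Lemma normr_bounds a : a <= `|a| /\ - a <= `|a|.
Proof. by split; [apply: ler_norm | rewrite -normrN; apply: ler_norm]. Qed.

Lemma mul_div_le c m : 0 <= c -> c <= m -> m * (c / m) = c.
Proof.
move=> c0 cm; case: (eqVneq m 0) => [m0|m0]; last by rewrite mulrC divfK.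
by rewrite m0 mul0r; apply/eqP; rewrite eq_le c0 -m0.
Qed.

Lemma div_le1 c m : 0 <= c -> c <= m -> 0 <= c / m <= 1.
Proof.
move=> c0 cm; case: (eqVneq m 0) => [->|m0]; first by rewrite invr0 mulr0 lexx ler01.
have mp : 0 < m by rewrite lt_def m0 (le_trans c0 cm).
by rewrite divr_ge0 ?(le_trans c0 cm) //= ler_pdivrMr // mul1r.
Qed.

Lemma sub_mul_divff u m : 0 <= u -> u <= m -> u - u * (m / m) = 0.
Proof.
move=> u0 um; case: (eqVneq m 0) => [m0|m0]; last by rewrite divff // mulr1 subrr.
have -> : u = 0 by apply/eqP; rewrite eq_le u0 -m0 um.
by rewrite mul0r subrr.
Qed.

Lemma ler_dist_min a b a' b' :
  `|Order.min a b - Order.min a' b'| <= `|a - a'| + `|b - b'|.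
Proof.
have [a1 a2] := normr_bounds (a - a'); have [b1 b2] := normr_bounds (b - b').
rewrite ler_norml; case: (leP a b) => h; case: (leP a' b') => h'.
all: by apply/andP; split; lra.
Qed.

Lemma ler_dist_scaled_excess q q' m n m' n' : 0 <= q <= 1 -> 0 <= q' <= 1 ->
  0 <= m -> 0 <= n -> 0 <= m' -> 0 <= n' ->
  `|q * (m - Order.min m n) - q' * (m' - Order.min m' n')| <=
    2 * `|q * m - q' * m'| + `|m - m'| + `|n - n'|.
Proof.
move=> /andP [q0 q1] /andP [q0' q1'] m0 n0 m0' n0'.
have [a1 a2] := normr_bounds (q * m - q' * m').
have [b1 b2] := normr_bounds (m - m').
have [c1 c2] := normr_bounds (n - n').
case: (leP m n) => h; case: (leP m' n') => h'.
- by rewrite !subrr !mulr0 subrr normr0; lra.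
- rewrite subrr mulr0 sub0r normrN ger0_norm; last by rewrite mulr_ge0 // subr_ge0 ltW.
  have : q' * (m' - n') <= m' - n' by rewrite ler_piMl // subr_ge0 ltW.
  lra.
- rewrite subrr mulr0 subr0 ger0_norm; last by rewrite mulr_ge0 // subr_ge0 ltW.
  have : q * (m - n) <= m - n by rewrite ler_piMl // subr_ge0 ltW.
  lra.
- by rewrite ler_norml; apply/andP; split; case: (lerP q q') => hq; nra.
Qed.

Lemma ler_dist_shrink u m n u' m' n' : 0 <= u -> u <= m -> 0 <= n ->
  0 <= u' -> u' <= m' -> 0 <= n' ->
  `|(u' - u' * (Order.min m' n' / m')) - (u - u * (Order.min m n / m))| <=
    2 * `|u' - u| + `|m' - m| + `|n' - n|.
Proof.
have scaled (v k p : R) : 0 <= v -> v <= k ->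
    [/\ v - v * (Order.min k p / k) = (v / k) * (k - Order.min k p),
        v = (v / k) * k & 0 <= v / k <= 1].
  move=> v0 vk; case: (eqVneq k 0) => [k0|k0].
    have -> : v = 0 by apply/eqP; rewrite eq_le v0 -k0 vk.
    by rewrite k0 !mul0r subrr lexx ler01.
  split; [by rewrite mulrBr divfK //; congr (_ - _); rewrite !mulrA mulrAC
         | by rewrite divfK | exact: div_le1].
move=> u0 um n0 u0' um' n0'.
have [e1 e2 q1] := scaled u m n u0 um; have [e1' e2' q1'] := scaled u' m' n' u0' um'.
rewrite e1 e1'; apply: le_trans (ler_dist_scaled_excess q1' q1 _ n0' _ n0) _.
- exact: le_trans um'.
- exact: le_trans um.
- by rewrite -e2 -e2'.
Qed.

Lemma order_stable_near a b : exists2 gap, 0 < gap & forall a' b',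
  `|a' - a| + `|b' - b| < gap -> (b' <= a' -> b <= a) /\ (a' <= b' -> a <= b).
Proof.
case: (ltgtP a b) => [ab|ba|->]; last by exists 1 => [|a' b' _]; [exact: ltr01 | split=> _].
- exists (b - a) => [|a' b' close]; first by rewrite subr_gt0.
  have [x1 x2] := normr_bounds (a' - a); have [y1 y2] := normr_bounds (b' - b).
  by split=> h; lra.
- exists (a - b) => [|a' b' close]; first by rewrite subr_gt0.
  have [x1 x2] := normr_bounds (a' - a); have [y1 y2] := normr_bounds (b' - b).
  by split=> h; lra.
Qed.

End RealBounds.

(* Compactness of [a, b] in Lebesgue-number form. *)
Lemma interval_uniform_radius (R : realType) (P : R -> R -> Prop) (a b : R) :
  a <= b -> (forall t e e', 0 < e' <= e -> P t e -> P t e') ->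
  (forall t, a <= t <= b -> exists2 e, 0 < e & P t e) ->
  (forall t t' e, 0 < e -> P t e -> `|t' - t| <= e / 2 -> P t' (e / 2)) ->
  exists2 e, 0 < e & forall t, a <= t <= b -> P t e.
Proof.
move=> ab mono loc shift.
pose S := [set tau | a <= tau <= b /\
  exists2 e, 0 < e & forall t, a <= t <= tau -> P t e].
have Sa : S a.
  have [e e0 Pe] : exists2 e, 0 < e & P a e by apply: loc; rewrite lexx ab.
  split; first by rewrite lexx ab.
  by exists e => // t /andP [h1 h2]; have -> : t = a by apply/eqP; rewrite eq_le h1 h2.
have hs : has_sup S by split; [exists a | exists b => x [/andP [_ ?] _]].
set T := sup S.
have aT : a <= T by apply: sup_upper_bound.
have Tb : T <= b by apply: ge_sup; [exists a | move=> x [/andP [_ ?] _]].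
have [eT eT0 PT] : exists2 e, 0 < e & P T e by apply: loc; rewrite aT Tb.
have eT20 : 0 < eT / 2 by rewrite divr_gt0.
have [tau1 [/andP [at1 t1b] [e1 e10 P1]] lt1] := sup_adherent eT20 hs.
rewrite -/T in lt1.
pose tau2 := Order.min b (T + eT / 2).
pose e := Order.min e1 (eT / 2).
have e0 : 0 < e by rewrite lt_min e10 eT20.
have P2 t : a <= t <= tau2 -> P t e.
  move=> /andP [at2 t2]; case: (lerP t tau1) => ht.
  - apply: (mono _ e1); first by rewrite e0 ge_min lexx.
    by apply: P1; rewrite at2 ht.
  - apply: (mono _ (eT / 2)); first by rewrite e0 ge_min lexx orbT.
    apply: (shift T t eT) => //.
    have := t2; rewrite /tau2 le_min => /andP [_ h2].
    by rewrite ler_norml; apply/andP; split; lra.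
have S2 : S tau2.
  split; last by exists e.
  rewrite /tau2 le_min ge_min lexx ab /=; lra.
have t2T : tau2 <= T := sup_upper_bound hs S2.
exists e => // t /andP [hat tb]; apply: P2; rewrite hat /= /tau2 le_min tb /=.
by move: t2T; rewrite /tau2 ge_min => /orP [bT|]; lra.
Qed.

Section DeformationRetract.
Variables (R : realType) (Z : Type) (K L : set (set Z)).
Variables (rho : (Z -> R) -> Z -> R) (H : R -> (Z -> R) -> Z -> R).
Hypothesis rho_point : forall f, is_point K f -> is_point L (rho f).
Hypothesis rho_id : forall f, is_point L f -> rho f = f.
Hypothesis rho_cont : forall U, openK L U ->
  openK K (fun f => is_point K f /\ U (rho f)).
Hypothesis H0 : forall f, H 0 f = f.
Hypothesis H1 : forall f, H 1 f = rho f.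
Hypothesis H_id : forall t f, is_point L f -> H t f = f.
Hypothesis H_point : forall (t : R) f, is_point K f -> 0 <= t <= 1 ->
  is_point K (H t f).
Hypothesis H_cont : forall U (t0 : R) f0, openK K U -> 0 <= t0 <= 1 ->
  is_point K f0 -> U (H t0 f0) ->
  exists2 del, 0 < del & exists2 V, openK K V /\ V f0 &
    forall (t : R) f, V f -> 0 <= t <= 1 -> `|t - t0| < del -> U (H t f).

Lemma contK_retract (I : finType) (D : set (I -> R)) g :
  contK D K g -> contK D L (rho \o g).
Proof.
move=> [gpt gc]; split=> [p Dp|U oU p Dp Up]; first exact/rho_point/gpt.
have [e e0 He] := gc _ (rho_cont oU) p Dp (conj (gpt p Dp) Up).
by exists e => // q Dq /(He q Dq) [].
Qed.

Lemma contK_deform n g : contK (@cube R 'I_n) K g ->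
  contK (@cube R (option 'I_n)) K (fun q => H (q None) (g (q \o Some))).
Proof.
have cube_Some (q : option 'I_n -> R) : cube q -> cube (q \o Some) by move=> cq i; apply: cq.
move=> [gpt gc]; split=> [q cq|U oU q cq Uq]; first exact/H_point/cq/gpt/cube_Some.
have [del del0 [V [oV Vg] HV]] := H_cont oU (cq None) (gpt _ (cube_Some q cq)) Uq.
have [e e0 He] := gc V oV _ (cube_Some q cq) Vg.
exists (Order.min del e) => [|q' cq' close]; first by rewrite lt_min del0 e0.
apply: HV; last by apply: lt_le_trans (close None) _; rewrite ge_min lexx.
  apply: He; first exact: cube_Some.
  by move=> i; apply: lt_le_trans (close (Some i)) _; rewrite ge_min lexx orbT.
exact: cq'.
Qed.

Lemma deformation_retract_weak_equiv : @weak_equiv_incl R Z L K.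
Proof.
move=> n x x_base.
have xL (p : 'I_n -> R) : bdry p -> is_point L x.
  by case: x_base => // n0 [i _]; subst n; case: i.
split=> [g [gc gb]|g0 g1 [[g0pt _] _] [[g1pt _] _] [G [Gc G0 G1 Gb]]].
- exists (rho \o g).
    split=> [|p cp bp]; first exact: contK_retract.
    by rewrite /= gb // rho_id //; apply: xL bp.
  exists (fun q => H (q None) (g (q \o Some))); split.
  + exact: contK_deform.
  + by move=> p cp; rewrite H0.
  + by move=> p cp; rewrite H1.
  + by move=> p t cp bp t01 /=; rewrite gb // H_id //; apply: xL bp.
- exists (rho \o G); split.
  + exact: contK_retract.
  + by move=> p cp /=; rewrite G0 // rho_id //; apply: g0pt.
  + by move=> p cp /=; rewrite G1 // rho_id //; apply: g1pt.
  + by move=> p t cp bp t01 /=; rewrite Gb // rho_id //; apply: xL bp.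
Qed.

End DeformationRetract.

Section Points.
Variables (R : realType) (Z : eqType).
Implicit Types (K : set (set Z)) (f g : Z -> R) (l : seq Z).

Definition supported_by f l := forall z, f z != 0 -> z \in l.

Definition induced K (B : set Z) : set (set Z) := [set s | K s /\ s `<=` B].

Lemma is_pointE K f : is_point K f <->
  [/\ forall z, 0 <= f z, K (supp f) &
      exists2 l, uniq l /\ supported_by f l & \sum_(z <- l) f z = 1].
Proof.
split.
- case=> f0 [Ks [l [/NoDup_uniq ul inl] s1]]; split => //.
  by exists l => //; split => // z fz; apply/In_mem/inl.
- case=> f0 Ks [l [ul fl] s1]; split => //; split => //.
  have fl' : supported_by f [seq z <- l | f z != 0].
    by move=> z fz; rewrite mem_filter fz fl.
  exists [seq z <- l | f z != 0].
    split; first by apply/NoDup_uniq; rewrite filter_uniq.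
    move=> z; rewrite In_mem; split; first exact: fl'.
    by rewrite mem_filter => /andP [].
  by rewrite -s1; apply: big_support_eq; rewrite ?filter_uniq.
Qed.

(* Junk value [[::]] when [f] has infinite support; points never do. *)
Definition supp_seq f : seq Z :=
  if pselect (exists l, uniq l /\ supported_by f l) is left H
  then projT1 (cid H) else [::].

Lemma supp_seqP f l : uniq l -> supported_by f l ->
  uniq (supp_seq f) /\ supported_by f (supp_seq f).
Proof.
move=> ul fl; rewrite /supp_seq; case: pselect => [H|[]]; last by exists l.
exact: projT2 (cid H).
Qed.

Lemma pointP K f : is_point K f ->
  [/\ forall z, 0 <= f z, K (supp f), uniq (supp_seq f),
      supported_by f (supp_seq f) & \sum_(z <- supp_seq f) f z = 1].
Proof.
case/is_pointE=> f0 Ks [l [ul fl] s1]; have [us fs] := supp_seqP ul fl.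
by split => //; rewrite -s1; apply: big_support_eq.
Qed.

Lemma point_sum K f l : is_point K f -> uniq l -> supported_by f l ->
  \sum_(z <- l) f z = 1.
Proof. by case/pointP=> _ _ us fs <- ul fl; apply: big_support_eq. Qed.

Lemma point_le1 K f z : is_point K f -> f z <= 1.
Proof.
case/pointP=> f0 _ _ fs s1; case: (eqVneq (f z) 0) => [->|/fs zs]; first exact: ler01.
by rewrite -s1; apply: ler_sum_term.
Qed.

Lemma is_point_supp K K' f : is_point K f -> K' (supp f) -> is_point K' f.
Proof. by move=> [f0 [_ h]] Ks'; split => //; split. Qed.

Lemma supp_neq0_of_sum l f : \sum_(z <- l) f z != 0 -> supp f !=set0.
Proof. by case/big_neq0_witness=> z _ fz; exists z. Qed.

Lemma simplex_seq (s : set Z) : finite_set s ->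
  exists l, uniq l /\ forall z, s z <-> z \in l.
Proof.
move/finite_seqP => [l ->]; exists (undup l); split; first exact: undup_uniq.
by move=> z; rewrite mem_undup.
Qed.

Definition l1dist l f g := \sum_(z <- l) `|g z - f z|.

Lemma l1dist_term l f g z : supported_by f l -> supported_by g l ->
  `|g z - f z| <= l1dist l f g.
Proof.
move=> fl gl; case: (boolP (z \in l)) => zl.
  by apply: (ler_sum_term (F := fun w => `|g w - f w|)) => // w.
have -> : f z = 0 by apply/eqP; apply: contraNT zl => /fl.
have -> : g z = 0 by apply/eqP; apply: contraNT zl => /gl.
by rewrite subrr normr0; apply: sumr_ge0 => w _; apply: normr_ge0.
Qed.

Lemma l1dist_small l (C e : R) : 0 < C -> 0 < e ->
  exists2 eta, 0 < eta & forall f g,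
    (forall z, z \in l -> `|g z - f z| < eta) -> C * l1dist l f g < e.
Proof.
move=> C0 e0; set k := C * ((size l)%:R + 1).
have k0 : 0 < k by rewrite mulr_gt0 // ltr_wpDl.
exists (e / k) => [|f g close]; first by rewrite divr_gt0.
have D : l1dist l f g <= (size l)%:R * (e / k).
  by rewrite /l1dist; apply: ler_sum_const => z /close /ltW.
have ke : k * (e / k) = e by rewrite mulrC divfK // gt_eqF.
have eta0 : 0 < e / k by rewrite divr_gt0.
have n0 : 0 <= (size l)%:R :> R by [].
move: ke eta0 D; rewrite /k; set eta := e / _ => ke eta0 D.
nra.
Qed.

End Points.

Section Retraction.
Variables (R : realType) (Z : eqType) (K : set (set Z)) (X Y : set Z) (a0 : Z).
Implicit Types (f g : Z -> R) (s : set Z) (l : seq Z).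

Definition only_X z := X z /\ ~ Y z.
Definition only_Y z := Y z /\ ~ X z.
Definition meets_both s := (exists2 x, s x & only_X x) /\ (exists2 y, s y & only_Y y).

Hypothesis K_finite : forall s, K s -> finite_set s.
Hypothesis K_face : forall s t, K s -> t `<=` s -> t !=set0 -> K t.
Hypothesis K_cone : forall s, K s -> meets_both s -> K (s `|` [set a0]).
Hypothesis XY_cover : forall z, X z \/ Y z.
Hypothesis a0X : X a0.
Hypothesis a0Y : Y a0.

Local Notation L := (induced K X `|` induced K Y).

Lemma sideP z : [\/ only_X z, only_Y z | X z /\ Y z].
Proof.
rewrite /only_X /only_Y; case: (pselect (X z)); case: (pselect (Y z)) => hy hx.
- by apply: Or33.
- by apply: Or31.
- by apply: Or32.
- by case: (XY_cover z).
Qed.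

Lemma only_X_neq_a0 z : only_X z -> z != a0.
Proof. by move=> [_ nY]; apply: contra_notN nY => /eqP ->. Qed.

Lemma only_Y_neq_a0 z : only_Y z -> z != a0.
Proof. by move=> [_ nX]; apply: contra_notN nX => /eqP ->. Qed.

Lemma not_meets_both_side s : ~ meets_both s -> s `<=` X \/ s `<=` Y.
Proof.
move=> ns; case: (pselect (exists2 x, s x & only_X x)) => [hx|nx].
- left => z sz; case: (sideP z) => [[]|zY|[]] //.
  by case: ns; split => //; exists z.
- right => z sz; case: (sideP z) => [zX|[]|[]] //.
  by case: nx; exists z.
Qed.

Definition cone s := if `[< meets_both s >] then s `|` [set a0] else s.

Lemma cone_K s : K s -> K (cone s).
Proof. by rewrite /cone; case: asboolP => // ms Ks; apply: K_cone. Qed.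

Lemma sub_cone s : s `<=` cone s.
Proof. by rewrite /cone; case: asboolP => _ z sz //; left. Qed.

Lemma cone_meets s : meets_both s -> cone s = s `|` [set a0].
Proof. by rewrite /cone; case: asboolP. Qed.

Lemma induced_cone_side s B : K s -> meets_both s -> B a0 ->
  induced K B ((s `&` B) `|` [set a0]).
Proof.
move=> Ks ms Ba; split; last by move=> z [[]|->].
apply: K_face (cone_K Ks) _ _; last by exists a0; right.
by rewrite cone_meets // => z [[sz _]|->]; [left|right].
Qed.

Definition mass (P : Z -> Prop) f : R :=
  \sum_(z <- supp_seq f | `[< P z >]) f z.

Definition transfer f := Order.min (mass only_X f) (mass only_Y f).

(* Move mass [transfer f] proportionally off each of [X \ Y] and [Y \ X]
   onto the apex [a0]. *)
Definition retract f z :=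
  f z - (if `[< only_X z >] then f z * (transfer f / mass only_X f) else 0)
      - (if `[< only_Y z >] then f z * (transfer f / mass only_Y f) else 0)
      + (if z == a0 then 2 * transfer f else 0).

Lemma massE P f l : uniq l -> supported_by f l ->
  mass P f = \sum_(z <- l | `[< P z >]) f z.
Proof.
move=> ul fl; have [us fs] := supp_seqP ul fl.
pose F z := if `[< P z >] then f z else 0.
have cover l' : supported_by f l' -> supported_by F l'.
  by move=> fl' z; rewrite /F; case: asboolP => _; [exact: fl' | rewrite eqxx].
by rewrite /mass big_mkcond [RHS]big_mkcond; apply: big_support_eq => //; apply: cover.
Qed.

Lemma mass_ge0 P f : (forall z, 0 <= f z) -> 0 <= mass P f.
Proof. by move=> f0; apply: sumr_ge0 => z _; apply: f0. Qed.

Lemma mass_term P f z : is_point K f -> P z -> f z <= mass P f.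
Proof.
case/pointP=> f0 _ _ fs _ Pz; case: (eqVneq (f z) 0) => [->|/fs zs].
  exact: mass_ge0.
rewrite /mass big_mkcond /=.
have -> : f z = if `[< P z >] then f z else 0 by rewrite asboolT.
by apply: ler_sum_term => // w; case: ifP => _; [exact: f0 | exact: lexx].
Qed.

Lemma transfer_bounds f : is_point K f ->
  [/\ 0 <= transfer f, transfer f <= mass only_X f & transfer f <= mass only_Y f].
Proof.
case/pointP=> f0 _ _ _ _; rewrite /transfer; split.
- by rewrite le_min !mass_ge0.
- by rewrite ge_min lexx.
- by rewrite ge_min lexx orbT.
Qed.

Lemma retract_only_X f z : only_X z ->
  retract f z = f z - f z * (transfer f / mass only_X f).
Proof.
move=> zX; have zY : ~ only_Y z by move=> [yz _]; apply: zX.2.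
by rewrite /retract (asboolT zX) (asboolF zY) (negbTE (only_X_neq_a0 zX)) subr0 addr0.
Qed.

Lemma retract_only_Y f z : only_Y z ->
  retract f z = f z - f z * (transfer f / mass only_Y f).
Proof.
move=> zY; have zX : ~ only_X z by move=> [xz _]; apply: zY.2.
by rewrite /retract (asboolT zY) (asboolF zX) (negbTE (only_Y_neq_a0 zY)) subr0 addr0.
Qed.

Lemma retract_common f z : X z -> Y z ->
  retract f z = f z + (if z == a0 then 2 * transfer f else 0).
Proof. by move=> zX zY; rewrite /retract !asboolF ?subr0 // => -[]. Qed.

Lemma retract_ge0 f z : is_point K f -> 0 <= retract f z.
Proof.
move=> pf; have [f0 _ _ _ _] := pointP pf; have [c0 cX cY] := transfer_bounds pf.
have shrink_ge0 m : transfer f <= m -> 0 <= f z - f z * (transfer f / m).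
  move=> cm; have /andP [_ q1] := div_le1 c0 cm.
  by rewrite -{1}(mulr1 (f z)) -mulrBr mulr_ge0 // subr_ge0.
case: (sideP z) => [zX|zY|[zX zY]].
- by rewrite retract_only_X // shrink_ge0.
- by rewrite retract_only_Y // shrink_ge0.
- by rewrite retract_common //; case: eqP => _; rewrite ?addr0 // addr_ge0 ?mulr_ge0.
Qed.

Lemma retract_transfer0 f : transfer f = 0 -> retract f = f.
Proof.
move=> c0; apply: funext => z.
by rewrite /retract c0 !mul0r !mulr0 !if_same !subr0 addr0.
Qed.

Lemma retract_neq0 f z : retract f z != 0 -> f z != 0 \/ z = a0.
Proof.
case: (eqVneq (f z) 0) => [fz|]; last by left.
case: (eqVneq z a0) => [|za]; first by right.
by rewrite /retract fz !mul0r !if_same (negbTE za) !subr0 addr0 eqxx.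
Qed.

Definition apex_seq f := undup (a0 :: supp_seq f).

Lemma apex_seqP f : is_point K f ->
  [/\ uniq (apex_seq f), a0 \in apex_seq f, supported_by f (apex_seq f)
    & supported_by (retract f) (apex_seq f)].
Proof.
case/pointP=> _ _ _ fs _.
have fl : supported_by f (apex_seq f).
  by move=> z /fs zs; rewrite mem_undup inE zs orbT.
split => //; first exact: undup_uniq.
- by rewrite mem_undup inE eqxx.
- by move=> z /retract_neq0 [/fl //|->]; rewrite mem_undup inE eqxx.
Qed.

Lemma retract_sum f : is_point K f -> \sum_(z <- apex_seq f) retract f z = 1.
Proof.
move=> pf; have [ul al fl _] := apex_seqP pf; have [c0 cX cY] := transfer_bounds pf.
have side P : transfer f <= mass P f -> \sum_(z <- apex_seq f)
    (if `[< P z >] then f z * (transfer f / mass P f) else 0) = transfer f.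
  by move=> cP; rewrite -big_mkcond -mulr_suml -massE // mul_div_le.
have apex : \sum_(z <- apex_seq f) (if z == a0 then 2 * transfer f else 0) =
    2 * transfer f.
  by rewrite -big_mkcond -big_filter filter_pred1_uniq // big_seq1.
rewrite /retract !big_split /= !sumrN side // side // apex (point_sum pf) //.
lra.
Qed.

Lemma meets_both_of_transfer f s : is_point K f -> transfer f != 0 ->
  supp f `<=` s -> meets_both s.
Proof.
move=> pf c0 fs; have [c_ge0 cX cY] := transfer_bounds pf.
have witness P : transfer f <= mass P f -> exists2 z, s z & P z.
  move=> cP; have : mass P f != 0 by apply: contraNneq c0 => P0; apply/eqP; lra.
  by rewrite /mass => /big_neq0_witness [z /asboolP Pz fz]; exists z => //; apply: fs.
by split; apply: witness.
Qed.

Lemma supp_retract_apex f s : supp f `<=` s -> supp (retract f) `<=` s `|` [set a0].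
Proof. by move=> fs z /retract_neq0 [/fs|->]; [left|right]. Qed.

Lemma supp_retract_cone f s : is_point K f -> supp f `<=` s ->
  supp (retract f) `<=` cone s.
Proof.
move=> pf fs; case: (eqVneq (transfer f) 0) => [c0|c0].
  by rewrite retract_transfer0 //; apply: subset_trans fs (@sub_cone s).
by rewrite cone_meets; [exact: supp_retract_apex | exact: meets_both_of_transfer c0 fs].
Qed.

Lemma supp_retract_X f : is_point K f -> mass only_Y f <= mass only_X f ->
  supp (retract f) `<=` X.
Proof.
move=> pf YX z; case: (sideP z) => [[]|zY|[]] //.
have [f0 _ _ _ _] := pointP pf.
rewrite /supp /= retract_only_Y // /transfer min_r // sub_mul_divff ?eqxx //.
exact: mass_term.
Qed.

Lemma supp_retract_Y f : is_point K f -> mass only_X f <= mass only_Y f ->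
  supp (retract f) `<=` Y.
Proof.
move=> pf XY z; case: (sideP z) => [zX|[]|[]] //.
have [f0 _ _ _ _] := pointP pf.
rewrite /supp /= retract_only_X // /transfer min_l // sub_mul_divff ?eqxx //.
exact: mass_term.
Qed.

Lemma point_induced_union f : is_point K f -> supp f `<=` X \/ supp f `<=` Y ->
  is_point L f.
Proof.
move=> pf h; have Ks := pf.2.1; apply: is_point_supp pf _.
by case: h => h; [left|right].
Qed.

Lemma point_of_induced_union f : is_point L f -> is_point K f.
Proof. by move=> pf; have [[Ks _]|[Ks _]] := pf.2.1; apply: is_point_supp pf _. Qed.

Lemma retract_point f : is_point K f -> is_point L (retract f).
Proof.
move=> pf; have [ul al _ rl] := apex_seqP pf.
have Kr : K (supp (retract f)).
  apply: K_face (cone_K pf.2.1) (supp_retract_cone pf (@subset_refl _ _)) _.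
  by apply: (@supp_neq0_of_sum _ _ (apex_seq f)); rewrite retract_sum ?oner_neq0.
apply: point_induced_union.
  apply/is_pointE; split => //; first by move=> z; apply: retract_ge0.
  by exists (apex_seq f); [split | apply: retract_sum].
case/orP: (le_total (mass only_Y f) (mass only_X f)) => h.
- by left; apply: supp_retract_X.
- by right; apply: supp_retract_Y.
Qed.

Lemma retract_id f : is_point L f -> retract f = f.
Proof.
case=> f0 [sL _]; apply: retract_transfer0.
have mass0 P B : supp f `<=` B -> (forall z, P z -> ~ B z) -> mass P f = 0.
  move=> fB PB; rewrite /mass big1 // => z /asboolP Pz.
  by case: (eqVneq (f z) 0) => // /fB Bz; case: (PB z Pz Bz).
rewrite /transfer; case: sL => -[_ fB].
- by rewrite (mass0 only_Y X) ?min_r ?mass_ge0 // => z [].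
- by rewrite (mass0 only_X Y) ?min_l ?mass_ge0 // => z [].
Qed.

Lemma mass_lip P l f g : uniq l -> supported_by f l -> supported_by g l ->
  `|mass P g - mass P f| <= l1dist l f g.
Proof.
move=> ul fl gl; rewrite (massE P ul fl) (massE P ul gl) -sumrB.
apply: le_trans (ler_norm_sum _ _ _) _.
rewrite /l1dist [X in _ <= X](bigID (fun z => `[< P z >])) /= lerDl.
by apply: sumr_ge0 => z _; apply: normr_ge0.
Qed.

Lemma retract_lip_masses f g z : is_point K f -> is_point K g ->
  `|retract g z - retract f z| <= 2 * `|g z - f z| +
    2 * (`|mass only_X g - mass only_X f| + `|mass only_Y g - mass only_Y f|).
Proof.
move=> pf pg; have [f0 _ _ _ _] := pointP pf; have [g0 _ _ _ _] := pointP pg.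
have [u1 u2] := normr_bounds (g z - f z).
have [x1 x2] := normr_bounds (mass only_X g - mass only_X f).
have [y1 y2] := normr_bounds (mass only_Y g - mass only_Y f).
case: (sideP z) => [zX|zY|[zX zY]].
- rewrite !retract_only_X // /transfer.
  apply: le_trans (ler_dist_shrink (f0 z) (mass_term pf zX) (mass_ge0 _ f0)
    (g0 z) (mass_term pg zX) (mass_ge0 _ g0)) _; lra.
- rewrite !retract_only_Y // /transfer (minC (mass only_X g)) (minC (mass only_X f)).
  apply: le_trans (ler_dist_shrink (f0 z) (mass_term pf zY) (mass_ge0 _ f0)
    (g0 z) (mass_term pg zY) (mass_ge0 _ g0)) _; lra.
- rewrite !retract_common //; case: eqP => _; last by rewrite !addr0; lra.
  have := ler_dist_min (mass only_X g) (mass only_Y g) (mass only_X f) (mass only_Y f).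
  rewrite /transfer; set c' := Order.min _ _; set c := Order.min _ _ => dc.
  have [c1 c2] := normr_bounds (c' - c).
  by rewrite ler_norml; apply/andP; split; lra.
Qed.

Lemma retract_lip l f g z : is_point K f -> is_point K g -> uniq l ->
  supported_by f l -> supported_by g l ->
  `|retract g z - retract f z| <= 6 * l1dist l f g.
Proof.
move=> pf pg ul fl gl; apply: le_trans (retract_lip_masses z pf pg) _.
have := l1dist_term z fl gl; have := mass_lip only_X ul fl gl.
have := mass_lip only_Y ul fl gl; lra.
Qed.

Lemma retract_open_flat U s f : openK L U -> K s -> ~ meets_both s ->
  is_point K f -> supp f `<=` s -> U (retract f) ->
  exists2 e, 0 < e & forall g, is_point K g -> supp g `<=` s ->
    (forall z, s z -> `|g z - f z| < e) -> is_point K g /\ U (retract g).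
Proof.
move=> [_ Uo] Ks ns pf fs Uf; have sXY := not_meets_both_side ns.
have fixed g : is_point K g -> supp g `<=` s -> retract g = g.
  move=> pg gs; apply: retract_transfer0; apply/eqP.
  by apply: contra_notT ns => c0; apply: meets_both_of_transfer pg c0 gs.
have sL : L s by case: sXY => h; [left|right]; split.
have rfs : supp (retract f) `<=` s by rewrite fixed.
have [e e0 He] := Uo s sL (retract f) Uf rfs.
exists e => // g pg gs close; split => //; rewrite fixed //.
apply: He; last by rewrite fixed.
- apply: point_induced_union => //.
  by case: sXY => h; [left|right]; apply: subset_trans h.
- exact: gs.
Qed.

Lemma supp_retract_side f s B : supp f `<=` s -> supp (retract f) `<=` B ->
  supp (retract f) `<=` (s `&` B) `|` [set a0].
Proof.
move=> fs fB z rz; case: (supp_retract_apex fs rz) => [sz|->]; last by right.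
by left; split => //; apply: fB.
Qed.

Lemma retract_close s f (m : R) : K s -> is_point K f -> supp f `<=` s -> 0 < m ->
  exists2 eta, 0 < eta & forall g, is_point K g -> supp g `<=` s ->
    (forall z, s z -> `|g z - f z| < eta) ->
    [/\ forall z, `|retract g z - retract f z| < m,
        mass only_Y g <= mass only_X g -> mass only_Y f <= mass only_X f &
        mass only_X g <= mass only_Y g -> mass only_X f <= mass only_Y f].
Proof.
move=> Ks pf fs m0.
have [l [ul sl]] := simplex_seq (K_finite Ks).
have fl : supported_by f l by move=> z /fs /sl.
have [gap gap0 stable] := order_stable_near (mass only_X f) (mass only_Y f).
have [mm mgap] : Order.min m gap <= m /\ Order.min m gap <= gap.
  by split; rewrite ge_min lexx ?orbT.
have m'0 : 0 < Order.min m gap by rewrite lt_min m0 gap0.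
have [eta eta0 Heta] := l1dist_small l (ltr0Sn R 5) m'0.
exists eta => // g pg gs close.
have gl : supported_by g l by move=> z /gs /sl.
have D := Heta f g (fun z zl => close z ((sl z).2 zl)).
have dX := mass_lip only_X ul fl gl; have dY := mass_lip only_Y ul fl gl.
have masses_close : `|mass only_X g - mass only_X f| +
    `|mass only_Y g - mass only_Y f| < gap.
  by have := normr_ge0 (mass only_X g - mass only_X f); lra.
have [stableX stableY] := stable _ _ masses_close.
split => // z; apply: le_lt_trans (retract_lip z pf pg ul fl gl) _; lra.
Qed.

Lemma retract_open_cone U s f : openK L U -> K s -> meets_both s ->
  is_point K f -> supp f `<=` s -> U (retract f) ->
  exists2 e, 0 < e & forall g, is_point K g -> supp g `<=` s ->
    (forall z, s z -> `|g z - f z| < e) -> is_point K g /\ U (retract g).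
Proof.
move=> [_ Uo] Ks ms pf fs Uf.
have radius B (b : bool) : L ((s `&` B) `|` [set a0]) ->
    (b -> supp (retract f) `<=` B) ->
    exists2 e, 0 < e & (b -> forall w, is_point L w ->
      supp w `<=` (s `&` B) `|` [set a0] ->
      (forall z, ((s `&` B) `|` [set a0]) z -> `|w z - retract f z| < e) -> U w).
  case: b => [LB /(_ isT) fB|_ _]; last by exists 1.
  by have [e e0 He] := Uo _ LB _ Uf (supp_retract_side fs fB); exists e.
have [eX eX0 HX] := radius X (mass only_Y f <= mass only_X f)
  (or_introl (induced_cone_side Ks ms a0X)) (supp_retract_X pf).
have [eY eY0 HY] := radius Y (mass only_X f <= mass only_Y f)
  (or_intror (induced_cone_side Ks ms a0Y)) (supp_retract_Y pf).
have e0 : 0 < Order.min eX eY by rewrite lt_min eX0 eY0.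
have [eta eta0 Hclose] := retract_close Ks pf fs e0.
exists eta => // g pg gs close; split => //.
have [near stableX stableY] := Hclose g pg gs close.
case/orP: (le_total (mass only_Y g) (mass only_X g)) => h.
- apply: (HX (stableX h)); first exact: retract_point.
    exact: supp_retract_side gs (supp_retract_X pg h).
  by move=> z _; apply: lt_le_trans (near z) _; rewrite ge_min lexx.
- apply: (HY (stableY h)); first exact: retract_point.
    exact: supp_retract_side gs (supp_retract_Y pg h).
  by move=> z _; apply: lt_le_trans (near z) _; rewrite ge_min lexx orbT.
Qed.

Lemma retract_continuous U : openK L U ->
  openK K (fun f => is_point K f /\ U (retract f)).
Proof.
move=> oU; split=> [f [] //|s Ks f [pf Uf] fs].
case: (pselect (meets_both s)) => ms.
- exact: retract_open_cone.
- exact: retract_open_flat.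
Qed.

Definition deform (t : R) f z := (1 - t) * f z + t * retract f z.

Lemma deform0 f : deform 0 f = f.
Proof. by apply: funext => z; rewrite /deform subr0 mul1r mul0r addr0. Qed.

Lemma deform1 f : deform 1 f = retract f.
Proof. by apply: funext => z; rewrite /deform subrr mul0r add0r mul1r. Qed.

Lemma deform_id t f : is_point L f -> deform t f = f.
Proof.
by move=> pf; apply: funext => z; rewrite /deform retract_id // -mulrDl subrK mul1r.
Qed.

Lemma deform_neq0 t f z : deform t f z != 0 -> f z != 0 \/ retract f z != 0.
Proof.
rewrite /deform; case: (eqVneq (f z) 0) => [->|]; last by left.
case: (eqVneq (retract f z) 0) => [->|]; last by right.
by rewrite !mulr0 addr0 eqxx.
Qed.

Lemma supp_deform_cone t f s : is_point K f -> supp f `<=` s ->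
  supp (deform t f) `<=` cone s.
Proof.
move=> pf fs z /deform_neq0 [fz|rz]; first exact/sub_cone/fs.
exact: supp_retract_cone pf fs z rz.
Qed.

Lemma deform_point t f : is_point K f -> 0 <= t <= 1 -> is_point K (deform t f).
Proof.
move=> pf /andP [t0 t1]; have [f0 Ks _ _ _] := pointP pf.
have [ul _ fl rl] := apex_seqP pf.
have s1 : \sum_(z <- apex_seq f) deform t f z = 1.
  by rewrite big_split /= -!mulr_sumr retract_sum // (point_sum pf) // !mulr1 subrK.
apply/is_pointE; split.
- by move=> z; rewrite /deform addr_ge0 // mulr_ge0 ?subr_ge0 // retract_ge0.
- apply: K_face (cone_K Ks) (supp_deform_cone pf (@subset_refl _ _)) _.
  by apply: (supp_neq0_of_sum (l := apex_seq f)); rewrite s1 oner_neq0.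
- by exists (apex_seq f) => //; split => // z /deform_neq0 [/fl|/rl].
Qed.

Lemma deform_time_lip t t' f z : is_point K f ->
  `|deform t' f z - deform t f z| <= `|t' - t|.
Proof.
move=> pf; have [f0 _ _ _ _] := pointP pf.
have -> : deform t' f z - deform t f z = (t' - t) * (retract f z - f z).
  by rewrite /deform; ring.
have h1 := point_le1 z pf; have h2 := retract_ge0 z pf.
have h3 := point_le1 z (point_of_induced_union (retract_point pf)).
rewrite normrM ler_piMr // ler_norml; apply/andP; split; have := f0 z; lra.
Qed.

Lemma deform_lip l f g t z : is_point K f -> is_point K g -> uniq l ->
  supported_by f l -> supported_by g l -> 0 <= t <= 1 ->
  `|deform t g z - deform t f z| <= 7 * l1dist l f g.
Proof.
move=> pf pg ul fl gl /andP [t0 t1].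
have -> : deform t g z - deform t f z =
    (1 - t) * (g z - f z) + t * (retract g z - retract f z).
  by rewrite /deform; ring.
have h1 := l1dist_term z fl gl; have h2 := retract_lip z pf pg ul fl gl.
apply: le_trans (ler_normD _ _) _.
rewrite !normrM (ger0_norm t0) ger0_norm ?subr_ge0 //.
have : (1 - t) * `|g z - f z| <= `|g z - f z|.
  by rewrite ler_piMl // lerBlDr lerDl.
have : t * `|retract g z - retract f z| <= `|retract g z - retract f z|.
  by rewrite ler_piMl.
lra.
Qed.

Definition tube U (t0 del : R) f :=
  is_point K f /\ forall t, 0 <= t <= 1 -> `|t - t0| <= del -> U (deform t f).

Lemma tube_open U t0 del : openK K U -> 0 <= t0 <= 1 -> 0 < del ->
  openK K (tube U t0 del).
Proof.
move=> [_ Uo] /andP [t0_ge0 t0_le1] del0; split=> [f [] //|s Ks f [pf Tf] fs].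
have [l [ul sl]] := simplex_seq (K_finite Ks).
have fl : supported_by f l by move=> z /fs /sl.
pose P t e := forall w, is_point K w -> supp w `<=` cone s ->
  (forall z, cone s z -> `|w z - deform t f z| < e) -> U w.
have [eps eps0 Heps] : exists2 e, 0 < e &
    forall t, Order.max 0 (t0 - del) <= t <= Order.min 1 (t0 + del) -> P t e.
  apply: interval_uniform_radius.
  - by rewrite ge_max !le_min; apply/andP; split; apply/andP; split; lra.
  - move=> t e e' /andP [e'0 e'e] Pe w pw ws wc; apply: Pe => // z sz.
    exact: lt_le_trans (wc z sz) e'e.
  - move=> t; rewrite ge_max !le_min => /andP [/andP [h0 h1] /andP [h2 h3]].
    have Ut : U (deform t f).
      by apply: Tf; [rewrite h0 h2 | rewrite ler_norml; apply/andP; split; lra].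
    have [e e0 He] := Uo _ (cone_K Ks) _ Ut (supp_deform_cone pf fs).
    by exists e.
  - move=> t t' e e0 Pe htt w pw ws wc; apply: Pe => // z sz.
    have := wc z sz; have := deform_time_lip t t' z pf.
    have [a1 a2] := normr_bounds (w z - deform t' f z).
    have [b1 b2] := normr_bounds (deform t' f z - deform t f z).
    have [c1 c2] := normr_bounds (w z - deform t f z).
    by move=> hd hw; rewrite ltr_norml; apply/andP; split; lra.
have [eta eta0 Heta] := l1dist_small l (ltr0Sn R 6) eps0.
exists eta => // g pg gs close; split => // t t01 htt.
have gl : supported_by g l by move=> z /gs /sl.
apply: (Heps t).
- move: htt t01; rewrite ler_norml ge_max !le_min => /andP [? ?] /andP [? ?].
  by apply/andP; split; apply/andP; split; lra.
- exact: deform_point.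
- exact: supp_deform_cone.
- move=> z _; apply: le_lt_trans (deform_lip z pf pg ul fl gl t01) _.
  exact: Heta f g (fun z zl => close z ((sl z).2 zl)).
Qed.

Lemma deform_continuous U (t0 : R) f0 : openK K U -> 0 <= t0 <= 1 ->
  is_point K f0 -> U (deform t0 f0) ->
  exists2 del, 0 < del & exists2 V, openK K V /\ V f0 &
    forall (t : R) f, V f -> 0 <= t <= 1 -> `|t - t0| < del -> U (deform t f).
Proof.
move=> oU t01 pf0 Uf0; have [_ Uo] := oU.
have [e e0 He] :=
  Uo _ (cone_K pf0.2.1) _ Uf0 (supp_deform_cone pf0 (@subset_refl _ _)).
have e20 : 0 < e / 2 by rewrite divr_gt0.
exists (e / 2) => //; exists (tube U t0 (e / 2)).
  split; first exact: tube_open.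
  split => // t t1 htt; apply: He; [exact: deform_point | exact: supp_deform_cone |].
  by move=> z _; apply: le_lt_trans (deform_time_lip t0 t z pf0) _; lra.
by move=> t f [_ Tf] t1 /ltW; apply: Tf.
Qed.

Theorem induced_union_weak_equiv : @weak_equiv_incl R Z L K.
Proof.
apply: (deformation_retract_weak_equiv (rho := retract) (H := deform)).
- exact: retract_point.
- exact: retract_id.
- exact: retract_continuous.
- exact: deform0.
- exact: deform1.
- exact: deform_id.
- by move=> t f pf t01; apply: deform_point.
- exact: deform_continuous.
Qed.

End Retraction.

Section VietorisRips.
Variables (R : realType) (Z : eqType) (d : Z -> Z -> \bar R) (r : R).
Implicit Types (s t B : set Z).

Lemma VR_finite s : VR d r setT s -> finite_set s.
Proof. by case. Qed.

Lemma VR_face s t : VR d r setT s -> t `<=` s -> t !=set0 -> VR d r setT t.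
Proof.
case=> [fs [_ [_ dd]]] ts tn; split; first exact: sub_finite_set fs.
by split => //; split => // x y /ts xs /ts ys; apply: dd.
Qed.

Lemma VR_induced B : VR d r B = induced (VR d r setT) B.
Proof.
apply/seteqP; split=> s.
- by case=> [fs [ne [sB dd]]].
- by case=> [[fs [ne [_ dd]]] sB].
Qed.

Section Hypotheses.
Variables (X Y : set Z) (a0 : Z).
Hypothesis d_distance : is_distance d.
Hypothesis r_ge0 : 0 <= r.
Hypothesis XY_cover : X `|` Y = setT.
Hypothesis a0X : X a0.
Hypothesis a0Y : Y a0.
Hypothesis near_common : forall x y v, (X `\` (X `&` Y)) x -> (Y `\` (X `&` Y)) y ->
  (X `&` Y) v -> (d x v <= d x y)%E /\ (d y v <= d x y)%E.
Hypothesis far_common : forall x y, (X `\` (X `&` Y)) x -> (Y `\` (X `&` Y)) y ->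
  (diam d (X `&` Y) <= d x y)%E.

Lemma in_X_or_Y z : X z \/ Y z.
Proof. by have : (X `|` Y) z by rewrite XY_cover. Qed.

Lemma VR_cone s : VR d r setT s -> meets_both X Y s -> VR d r setT (s `|` [set a0]).
Proof.
have [_ [dsym d0]] := d_distance.
have diffX (x : Z) : only_X X Y x -> (X `\` (X `&` Y)) x.
  by case=> xX xY; split => // -[].
have diffY (y : Z) : only_Y X Y y -> (Y `\` (X `&` Y)) y.
  by case=> yY yX; split => // -[].
move=> [fs [ne [_ dd]]] [[x0 sx0 /diffX x0X] [y0 sy0 /diffY y0Y]].
have apex_near z : s z -> (d z a0 <= r%:E)%E.
  move=> sz; case: (sideP in_X_or_Y z) => [/diffX zX|/diffY zY|[zX zY]].
  - by apply: le_trans (near_common zX y0Y (conj a0X a0Y)).1 _; apply: dd.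
  - apply: le_trans (near_common x0X zY (conj a0X a0Y)).2 _.
    by rewrite dsym; apply: dd.
  - apply: le_trans _ (dd _ _ sx0 sy0); apply: le_trans _ (far_common x0X y0Y).
    by apply: ereal_sup_ubound; exists z => //; exists a0.
split; first by rewrite finite_setU; split => //; apply: finite_set1.
split; first by case: ne => z sz; exists z; left.
split => // x y [sx|->] [sy|->].
- exact: dd.
- exact: apex_near.
- by rewrite dsym; apply: apex_near.
- by rewrite d0 lee_fin.
Qed.

Theorem VR_union_weak_equiv :
  @weak_equiv_incl R Z (VR d r X `|` VR d r Y) (VR d r setT).
Proof.
rewrite (VR_induced X) (VR_induced Y).
apply: (induced_union_weak_equiv (a0 := a0)) => //.
- exact: VR_finite.
- exact: VR_face.
- exact: VR_cone.
- exact: in_X_or_Y.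
Qed.

End Hypotheses.

End VietorisRips.

Theorem proposition10p7 (R : realType) (Z : Type) (d : Z -> Z -> \bar R)
  (X Y : set Z) :
  is_distance d ->
  X `|` Y = setT ->
  (X `&` Y) !=set0 ->
  (forall x y v, (X `\` (X `&` Y)) x -> (Y `\` (X `&` Y)) y -> (X `&` Y) v ->
     (d x v <= d x y)%E /\ (d y v <= d x y)%E) ->
  (forall x y, (X `\` (X `&` Y)) x -> (Y `\` (X `&` Y)) y ->
     (diam d (X `&` Y) <= d x y)%E) ->
  forall r : R, 0 <= r ->
    @weak_equiv_incl R Z (VR d r X `|` VR d r Y) (VR d r setT).
Proof.
move=> dist cover [a0 [a0X a0Y]] near far r r0.
exact: (@VR_union_weak_equiv R {classic Z} d r X Y a0).
Qed.
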